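(* For any $\alpha>0$ and $\epsilon>0$, there is no $\epsilon$-differentially private (central model) $(\alpha, 0.01m^2)$-approximation algorithm for rank aggregation when $n=o(m/\epsilon)$.
   Context: Items are $[m]=\{1,\dots,m\}$; $\mathbb{S}_m$ is the set of rankings (permutations) of $[m]$, $\pi(j)$ being the position of item $j$. The Kendall tau distance is $K(\pi_1,\pi_2)=|\{(i,j):\pi_1(i)<\pi_1(j),\ \pi_2(i)>\pi_2(j)\}|$. An input is a list $\Pi=\{\pi_1,\dots,\pi_n\}$ of $n$ rankings. Define $\bar K(\sigma,\Pi)=\frac1n\sum_k K(\sigma,\pi_k)$ and $\mathrm{OPT}(\Pi)=\min_\sigma\bar K(\sigma,\Pi)$. A randomized algorithm is an $(\alpha,\beta)$-approximation algorithm if for every input $\Pi$ its output $\sigma$ satisfies $\mathbb{E}[\bar K(\sigma,\Pi)]\le\alpha\,\mathrm{OPT}(\Pi)+\beta$. Two inputs are neighboring if they differ in a single ranking; an algorithm $\mathcal{M}$ is $\epsilon$-DP (central model) if for all neighboring $\Pi,\Pi'$ and all output sets $S$, $\Pr[\mathcal{M}(\Pi)\in S]\le e^{\epsilon}\Pr[\mathcal{M}(\Pi')\in S]$. *)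

From HB Require Import structures.
From mathcomp Require Import all_boot all_order all_algebra all_fingroup.
From mathcomp Require Import reals sequences exp.
Set Implicit Arguments. Unset Strict Implicit. Unset Printing Implicit Defensive.
Import Order.TTheory GRing.Theory Num.Theory.
Local Open Scope ring_scope.

(* A ranking of [m] = {0,..,m-1} is a permutation pi : 'S_m; pi j is the
   position of item j. *)

Definition kendall (m : nat) (p1 p2 : 'S_m) : nat :=
  #|[set ij : 'I_m * 'I_m |
      ((p1 ij.1 < p1 ij.2)%N && (p2 ij.2 < p2 ij.1)%N)]|.

Definition profile (n m : nat) := {ffun 'I_n -> 'S_m}.

Definition Kbar {R : realType} (n m : nat) (sigma : 'S_m) (Pi : profile n m) : R :=
  (\sum_(k < n) (kendall sigma (Pi k))%:R) / n%:R.

Definition OPT {R : realType} (n m : nat) (Pi : profile n m) : R :=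
  \big[Order.min/(Kbar 1 Pi : R)]_(sigma : 'S_m) Kbar sigma Pi.

(* A randomized algorithm is given by its output distribution on each input. *)
Definition is_distr {R : realType} (m : nat) (d : {ffun 'S_m -> R}) : Prop :=
  (forall s, 0 <= d s) /\ \sum_s d s = 1.

Definition is_mechanism {R : realType} (n m : nat)
  (M : profile n m -> {ffun 'S_m -> R}) : Prop :=
  forall Pi, is_distr (M Pi).

Definition expected_Kbar {R : realType} (n m : nat)
  (M : profile n m -> {ffun 'S_m -> R}) (Pi : profile n m) : R :=
  \sum_(s : 'S_m) M Pi s * Kbar s Pi.

Definition approx_alg {R : realType} (n m : nat)
  (M : profile n m -> {ffun 'S_m -> R}) (alpha beta : R) : Prop :=
  forall Pi, expected_Kbar M Pi <= alpha * OPT Pi + beta.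

Definition neighboring (n m : nat) (Pi Pi' : profile n m) : Prop :=
  (#|[set k | Pi k != Pi' k]| <= 1)%N.

Definition eps_DP {R : realType} (n m : nat)
  (M : profile n m -> {ffun 'S_m -> R}) (eps : R) : Prop :=
  forall Pi Pi', neighboring Pi Pi' ->
  forall S : {set 'S_m},
    \sum_(s in S) M Pi s <= expR eps * \sum_(s in S) M Pi' s.

(* A packing argument.  Put h = m/4 and, for a bit vector x, let [flip_perm h x]
   exchange the positions i and m-1-i for every i < h with x i set.  The m - 2h
   middle items never move while every flipped pair straddles them, so a ranking s
   can be within Kendall distance T of [flip_perm h x] only if x disagrees with a
   bit vector determined by s in at most T/(m - 2h) places.  On the input where all
   n voters submit [flip_perm h x] we have OPT = 0, so by Markov an
   (alpha, m^2/100)-approximation puts mass 1/2 on the ball of radius m^2/50 around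
   it; group privacy transfers this, up to the factor e^(eps n), to one fixed input.
   Summing over x and bounding the overlaps of the balls yields
   1/2 <= e^(eps n) 2^(m/25) (3/4)^(m/4), false once eps n <= m/80 and m >= 60. *)

From HB Require Import structures.
From mathcomp Require Import all_boot all_order all_algebra all_fingroup.
From mathcomp Require Import reals sequences exp.
From mathcomp Require Import zify lra.
Import Order.TTheory GRing.Theory Num.Theory.

Set Implicit Arguments. Unset Strict Implicit. Unset Printing Implicit Defensive.

Definition discordant m (s p : 'S_m) (a b : 'I_m) : bool :=
  (s a < s b) && (p b < p a).

Lemma kendallE m (s p : 'S_m) : kendall s p = \sum_a \sum_b discordant s p a b.
Proof.
rewrite /kendall -sum1_card pair_big big_mkcond /=.
by apply: eq_bigr => -[a b] _; rewrite inE /discordant; case: ifP.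
Qed.

Lemma kendall_refl m (p : 'S_m) : kendall p p = 0.
Proof.
rewrite kendallE big1 // => a _; rewrite big1 // => b _.
by rewrite /discordant; case: ltngtP.
Qed.

Definition kball m (p : 'S_m) (T : nat) : {set 'S_m} := [set s | kendall s p <= T].

Section Packing.

Variables m h : nat.
Hypothesis h2m : 2 * h <= m.

Definition outer (a : 'I_m) : bool := (a < h) || (rev_ord a < h).

Definition inner (a : 'I_m) : bool := ~~ outer a.

Definition flipped (x : {ffun 'I_m -> bool}) (a : 'I_m) : bool :=
  ((a < h) && x a) || ((rev_ord a < h) && x (rev_ord a)).

Definition flip_fun x (a : 'I_m) : 'I_m := if flipped x a then rev_ord a else a.

Lemma flipped_rev x a : flipped x (rev_ord a) = flipped x a.
Proof. by rewrite /flipped rev_ordK orbC. Qed.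

Lemma flip_funK x : involutive (flip_fun x).
Proof.
move=> a; rewrite /flip_fun; case fa: (flipped x a); last by rewrite fa.
by rewrite flipped_rev fa rev_ordK.
Qed.

Definition flip_perm x : 'S_m := perm (can_inj (flip_funK x)).

Lemma flip_permE x a : flip_perm x a = flip_fun x a.
Proof. exact: permE. Qed.

Lemma sum_outer (F : 'I_m -> nat) :
  \sum_(a | outer a) F a = \sum_(i : 'I_m | i < h) (F i + F (rev_ord i)).
Proof.
rewrite big_split /= (bigID (fun a : 'I_m => a < h)) /=; congr (_ + _).
  by apply: eq_bigl => a; rewrite /outer; case: ltnP; rewrite ?andbF.
rewrite (reindex_inj rev_ord_inj) /=; apply: eq_bigl => a.
by rewrite /outer rev_ordK /=; have := ltn_ord a; lia.
Qed.

Lemma card_inner : #|inner| = m - 2 * h.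
Proof.
have card_outer : #|outer| = 2 * h.
  have hm : h <= m by lia.
  rewrite -sum1_card sum_outer (big_ord_narrow hm) sum_nat_const card_ord.
  by rewrite mulnC.
by apply/eqP; rewrite -(eqn_add2l #|outer|) cardC card_outer card_ord; apply/eqP; lia.
Qed.

Lemma outer_rev a : outer (rev_ord a) = outer a.
Proof. by rewrite /outer rev_ordK orbC. Qed.

Lemma outer_flip_perm x a : outer (flip_perm x a) = outer a.
Proof. by rewrite flip_permE /flip_fun; case: ifP; rewrite ?outer_rev. Qed.

Lemma flip_perm_inner x b : inner b -> flip_perm x b = b.
Proof.
rewrite /inner /outer negb_or => /andP[/negbTE b_ge /negbTE rb_ge].
by rewrite flip_permE /flip_fun /flipped b_ge rb_ge.
Qed.

Lemma flipped_low x (i : 'I_m) : i < h -> flipped x i = x i.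
Proof.
move=> ih; have rih : (rev_ord i < h) = false by apply/negbTE; rewrite -leqNgt /=; lia.
by rewrite /flipped ih rih orbF.
Qed.

Variable s : 'S_m.

Definition below (a : 'I_m) : nat := \sum_(b | inner b) (s b < s a).
Definition above (a : 'I_m) : nat := \sum_(b | inner b) (s a < s b).

Definition disc_inner x (a : 'I_m) : nat :=
  \sum_(b | inner b)
    (discordant s (flip_perm x) a b + discordant s (flip_perm x) b a).

Lemma below_add_above a : outer a -> below a + above a = m - 2 * h.
Proof.
move=> oa; rewrite -card_inner -sum1_card -big_split /=.
apply: eq_bigr => b ib; have ab : a != b by apply: contraTneq ib => <-; rewrite /inner oa.
move: ab; rewrite -(inj_eq (@perm_inj _ s)) -(inj_eq val_inj) /=.
by case: ltngtP => // ->; rewrite eqxx.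
Qed.

Lemma disc_innerE x a : outer a ->
  disc_inner x a = if flip_perm x a < h then below a else above a.
Proof.
rewrite -(outer_flip_perm x) /disc_inner /below /above => opa.
case: ifP => pa_h; apply: eq_bigr => b ib; rewrite /discordant flip_perm_inner //;
  move: opa ib; rewrite /inner /outer /= pa_h; have := ltn_ord b;
  case: ltngtP; case: ltngtP; rewrite ?andbF ?andbT //=; lia.
Qed.

(* Each pair counted on the left has exactly one outer and one inner item. *)
Lemma sum_disc_inner_le_kendall x :
  \sum_(a | outer a) disc_inner x a <= kendall s (flip_perm x).
Proof.
rewrite kendallE [leqRHS](bigID outer) /= /disc_inner.
under eq_bigr do rewrite big_split /=.
rewrite big_split /= [X in _ + X <= _]exchange_big /=.
by apply: leq_add; apply: leq_sum => a _; rewrite [leqRHS](bigID outer) /=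
  ?leq_addl ?leq_addr.
Qed.

(* The two choices of x i cost 2(m - 2h) in total on the pair {i, m-1-i}, so the
   costlier one, which [best] avoids, costs at least m - 2h. *)
Definition best (i : 'I_m) : bool :=
  above i + below (rev_ord i) < below i + above (rev_ord i).

Lemma pair_disc_inner_ge (x : {ffun 'I_m -> bool}) (i : 'I_m) : i < h ->
  (m - 2 * h) * (x i != best i) <= disc_inner x i + disc_inner x (rev_ord i).
Proof.
move=> ih; have oi : outer i by rewrite /outer ih.
have ori : outer (rev_ord i) by rewrite outer_rev.
have rih : rev_ord i < h = false by apply/negbTE; rewrite -leqNgt /=; lia.
rewrite !disc_innerE // !flip_permE /flip_fun flipped_rev flipped_low // rev_ordK.
have := below_add_above oi; have := below_add_above ori.
by rewrite /best; case: (x i); rewrite /= ?ih ?rih; case: ltnP; lia.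
Qed.

Definition mismatch (x : {ffun 'I_m -> bool}) : nat :=
  \sum_(i : 'I_m | i < h) (x i != best i).

Lemma kendall_flip_ge x : (m - 2 * h) * mismatch x <= kendall s (flip_perm x).
Proof.
apply: leq_trans (sum_disc_inner_le_kendall x); rewrite sum_outer big_distrr /=.
by apply: leq_sum => i; apply: pair_disc_inner_ge.
Qed.

End Packing.

Local Open Scope ring_scope.

Lemma eps_DP_group (R : realType) N m (M : profile N m -> {ffun 'S_m -> R})
    (eps : R) (P Q : profile N m) (S : {set 'S_m}) :
  eps_DP M eps -> \sum_(s in S) M P s <= expR eps ^+ N * \sum_(s in S) M Q s.
Proof.
move=> dp.
pose hybrid k : profile N m := [ffun i : 'I_N => if (i < k)%N then P i else Q i].
have neighbor k : neighboring (hybrid k.+1) (hybrid k).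
  have at_k i : hybrid k.+1 i != hybrid k i -> i = k :> nat.
    by rewrite !ffunE ltnS; case: ltngtP; rewrite ?eqxx.
  apply/card_le1_eqP => i j; rewrite !inE => /at_k ik /at_k jk.
  by apply: val_inj; rewrite /= ik jk.
have hybrid_le k : \sum_(s in S) M (hybrid k) s <= expR eps ^+ k * \sum_(s in S) M Q s.
  elim: k => [|k IHk].
    have -> : hybrid 0%N = Q by apply/ffunP => i; rewrite ffunE.
    by rewrite expr0 mul1r.
  apply: le_trans (dp _ _ (neighbor k) S) _; rewrite exprS -mulrA.
  by apply: ler_wpM2l; [exact: expR_ge0 | exact: IHk].
have -> : P = hybrid N by apply/ffunP => i; rewrite ffunE ltn_ord.
exact: hybrid_le.
Qed.

Lemma markov_half (R : realType) m (d : {ffun 'S_m -> R}) (f : 'S_m -> nat) (T : nat) :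
  is_distr d -> \sum_s d s * (f s)%:R <= T.+1%:R / 2 ->
  1 / 2 <= \sum_(s | (f s <= T)%N) d s.
Proof.
move=> [d_ge0 d_sum1] mean_le.
have tail_le : \sum_(s | ~~ (f s <= T)%N) d s * T.+1%:R <= T.+1%:R / 2.
  apply: le_trans mean_le; rewrite [X in _ <= X](bigID (fun s => (f s <= T)%N)) /=.
  rewrite -[X in X <= _]add0r; apply: lerD.
    by apply: sumr_ge0 => s _; rewrite mulr_ge0.
  by apply: ler_sum => s; rewrite -ltnNge => fs_gt; rewrite ler_wpM2l // ler_nat.
rewrite -big_distrl /= [T.+1%:R / 2]mulrC ler_pM2r ?ltr0n // in tail_le.
by move: d_sum1; rewrite (bigID (fun s => (f s <= T)%N)) /=; lra.
Qed.

Lemma Kbar_const (R : realType) N m (p s : 'S_m) : (0 < N)%N ->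
  Kbar s ([ffun _ => p] : profile N m) = (kendall s p)%:R :> R.
Proof.
move=> N_gt0; rewrite /Kbar; under eq_bigr do rewrite ffunE.
by rewrite sumr_const card_ord -[_ *+ N]mulr_natr mulfK // pnatr_eq0 -lt0n.
Qed.

Lemma OPT_const_le0 (R : realType) N m (p : 'S_m) : (0 < N)%N ->
  OPT ([ffun _ => p] : profile N m) <= 0 :> R.
Proof.
move=> N_gt0; rewrite /OPT; apply: le_trans (bigmin_le _ p _) _.
by rewrite Kbar_const // kendall_refl.
Qed.

Lemma approx_kball_mass (R : realType) N m (M : profile N m -> {ffun 'S_m -> R})
    (alpha beta : R) (p : 'S_m) (T : nat) :
  (0 < N)%N -> 0 <= alpha -> is_mechanism M -> approx_alg M alpha beta ->
  beta <= T.+1%:R / 2 -> 1 / 2 <= \sum_(s in kball p T) M [ffun _ => p] s.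
Proof.
move=> N_gt0 alpha_ge0 mech apx beta_le.
have mean_le : \sum_s M [ffun _ => p] s * (kendall s p)%:R <= T.+1%:R / 2.
  have := apx [ffun _ => p]; rewrite /expected_Kbar.
  under eq_bigr do rewrite Kbar_const //.
  have := mulr_ge0_le0 alpha_ge0 (OPT_const_le0 R p N_gt0); lra.
under eq_bigl do rewrite inE.
exact: markov_half.
Qed.

Section PackingMass.

Variables (R : realType) (m h : nat).
Hypothesis h2m : (2 * h <= m)%N.

Lemma sum_mismatch (s : 'S_m) :
  \sum_(x : {ffun 'I_m -> bool}) (2^-1 : R) ^+ mismatch h s x = 2 ^+ m * (3 / 4) ^+ h.
Proof.
under eq_bigr do rewrite /mismatch expr_sum big_mkcond /=.
rewrite -(bigA_distr_bigA (fun (i : 'I_m) (b : bool) =>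
  if (i < h)%N then (2^-1 : R) ^+ (b != best h s i) else 1)) /=.
rewrite (eq_bigr (fun i : 'I_m => 2 * if (i < h)%N then 3 / 4 else 1)); last first.
  by move=> i _; rewrite big_bool /=; case: ifP => _; case: (best h s i) => /=; lra.
have hm : (h <= m)%N by lia.
rewrite big_split /= prodr_const card_ord -big_mkcond /= (big_ord_narrow hm).
by rewrite prodr_const card_ord.
Qed.

Lemma card_kball_flip (s : 'S_m) (T : nat) : (0 < m - 2 * h)%N ->
  #|[set x | s \in kball (flip_perm h x) T]|%:R
    <= 2 ^+ (T %/ (m - 2 * h)) * (2 ^+ m * (3 / 4) ^+ h) :> R.
Proof.
move=> width_gt0; rewrite -(sum_mismatch s) big_distrr /= -sum1_card natr_sum.
rewrite big_mkcond /=; apply: ler_sum => x _; rewrite !inE.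
case: ifP => [close | _]; last by rewrite mulr_ge0 // exprn_ge0 // invr_ge0.
have : (mismatch h s x <= T %/ (m - 2 * h))%N.
  by rewrite leq_divRL // mulnC (leq_trans (kendall_flip_ge h2m s x) close).
rewrite exprVn ler_pdivlMr ?exprn_gt0 // mul1r => le_mismatch.
by rewrite ler_eXn2l ?ltr1n.
Qed.

Lemma sum_kball_flip_le (d : {ffun 'S_m -> R}) (T : nat) :
  (0 < m - 2 * h)%N -> is_distr d ->
  \sum_(x : {ffun 'I_m -> bool}) \sum_(s in kball (flip_perm h x) T) d s
    <= 2 ^+ (T %/ (m - 2 * h)) * (2 ^+ m * (3 / 4) ^+ h).
Proof.
move=> width_gt0 [d_ge0 d_sum1].
set bound := _ * _; rewrite -[leRHS]mul1r -d_sum1 big_distrl /=.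
under eq_bigr do rewrite big_mkcond /=.
rewrite exchange_big /=; apply: ler_sum => s _.
rewrite -big_mkcondr /= sumr_const -[_ *+ _]mulr_natr ler_wpM2l //.
rewrite (@eq_card _ _ [set x | s \in kball (flip_perm h x) T]) => [|x].
  exact: card_kball_flip.
by rewrite inE.
Qed.

Lemma eps_DP_packing N (M : profile N m -> {ffun 'S_m -> R}) (eps : R) (T : nat) :
  (0 < m - 2 * h)%N -> is_mechanism M -> eps_DP M eps ->
  (forall x,
     1 / 2 <= \sum_(s in kball (flip_perm h x) T) M [ffun _ => flip_perm h x] s) ->
  1 / 2 <= expR eps ^+ N * 2 ^+ (T %/ (m - 2 * h)) * (3 / 4) ^+ h.
Proof.
move=> width_gt0 mech dp concentrated.
pose P0 : profile N m := [ffun _ => 1%g].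
have : \sum_(x : {ffun 'I_m -> bool}) 1 / 2
    <= expR eps ^+ N * (2 ^+ (T %/ (m - 2 * h)) * (2 ^+ m * (3 / 4) ^+ h)).
  apply: le_trans (ler_wpM2l (exprn_ge0 _ (expR_ge0 eps))
    (sum_kball_flip_le _ width_gt0 (mech P0))); rewrite big_distrr /=.
  by apply: ler_sum => x _; apply: le_trans (concentrated x) (eps_DP_group _ _ _ dp).
rewrite sumr_const card_ffun !card_ord card_bool -[1 / 2 *+ _]mulr_natr natrX.
by rewrite [2 ^+ m * _]mulrC !mulrA ler_pM2r ?exprn_gt0.
Qed.

End PackingMass.

Lemma expR_half_le2 (R : realType) : expR (2^-1 : R) <= 2.
Proof.
have := expR_ge1Dx (- 2^-1 : R); rewrite expRN.
have e_gt0 : 0 < expR (2^-1 : R) by exact: expR_gt0.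
move=> /(ler_wpM2r (ltW e_gt0)); rewrite mulVf ?gt_eqF //; lra.
Qed.

Lemma expR_pow40_le (R : realType) (eps : R) (N m : nat) :
  N%:R * eps <= m%:R / 80 -> (expR eps ^+ N) ^+ 40 <= 2 ^+ m.
Proof.
move=> small; rewrite -!expRM_natl.
apply: le_trans (_ : expR (m%:R * 2^-1) <= _); first by rewrite ler_expR; lra.
rewrite expRM_natl lerXn2r ?nnegrE ?expR_ge0 //; exact: expR_half_le2.
Qed.

Lemma packing_bound_lt_half (R : realType) (E : R) (m : nat) :
  (60 <= m)%N -> 0 <= E -> E ^+ 40 <= 2 ^+ m ->
  E * 2 ^+ (m ^ 2 %/ 50 %/ (m - 2 * (m %/ 4))) * (3 / 4) ^+ (m %/ 4) < 1 / 2.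
Proof.
move=> m_ge60 E_ge0 E40.
set h := (m %/ 4)%N; set r := (_ %/ _)%N.
have r_le : (25 * r <= m)%N.
  have rW : (r * (m - 2 * h) <= m ^ 2 %/ 50)%N by apply: leq_divM.
  have T50 : (m ^ 2 %/ 50 * 50 <= m ^ 2)%N by apply: leq_divM.
  have : (25 * r * m <= m * m)%N by rewrite mulnn; nia.
  by rewrite leq_pmul2r //; lia.
have h_ge : (m <= 4 * h + 3)%N by lia.
have q5 : (3 / 4 : R) ^+ 5 <= 2^-1 ^+ 2 by rewrite !exprS expr0; lra.
have pow40_le : (E * 2 ^+ r * (3 / 4) ^+ h) ^+ 40
    <= 2 ^+ m * 2 ^+ (2 * m) * 2^-1 ^+ (16 * h).
  rewrite exprMn [(E * _) ^+ 40]exprMn -!exprM.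
  apply: ler_pM; rewrite ?mulr_ge0 ?exprn_ge0 //; try lra.
    by apply: ler_pM; rewrite ?exprn_ge0 // ler_eXn2l ?ltr1n //; lia.
  rewrite (_ : (h * 40 = 5 * (8 * h))%N); last by lia.
  rewrite (_ : (16 * h = 2 * (8 * h))%N); last by lia.
  by rewrite !exprM lerXn2r ?nnegrE ?exprn_ge0 //; lra.
rewrite ltNge div1r; apply/negP => half_le.
have : 2^-1 ^+ 40 <= 2 ^+ m * 2 ^+ (2 * m) * 2^-1 ^+ (16 * h) :> R.
  apply: le_trans pow40_le; apply: lerXn2r half_le; rewrite nnegrE.
  - lra.
  - by rewrite !mulr_ge0 ?exprn_ge0 //; lra.
rewrite !exprVn ler_pdivlMr ?exprn_gt0 // mulrC ler_pdivrMr ?exprn_gt0 //.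
by rewrite -!exprD ler_eXn2l ?ltr1n //; lia.
Qed.

Theorem theorem5 (R : realType) (alpha eps : R) (n : nat -> nat) :
  0 < alpha -> 0 < eps ->
  (forall c : R, 0 < c -> exists M0 : nat, forall m : nat, (M0 <= m)%N ->
      (n m)%:R <= c * (m%:R / eps)) ->
  exists M0 : nat, forall m : nat, (M0 <= m)%N -> (0 < n m)%N ->
    forall M : profile (n m) m -> {ffun 'S_m -> R},
      ~ [/\ is_mechanism M, eps_DP M eps &
            approx_alg M alpha ((1 / 100) * (m ^ 2)%:R)].
Proof.
move=> alpha_gt0 eps_gt0 n_small.
have [M1 n_le] : exists M1 : nat,
    forall m, (M1 <= m)%N -> (n m)%:R <= 80^-1 * (m%:R / eps).
  by apply: n_small; rewrite invr_gt0.
exists (maxn M1 60) => m; rewrite geq_max => /andP[m_ge_M1 m_ge60] n_gt0 M [mech dp apx].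
set h := (m %/ 4)%N; set T := (m ^ 2 %/ 50)%N.
have h2m : (2 * h <= m)%N by lia.
have beta_le : 1 / 100 * (m ^ 2)%:R <= T.+1%:R / 2 :> R.
  have : (m ^ 2 <= 50 * T.+1)%N by apply/ltnW; rewrite mulnC ltn_ceil.
  by rewrite -(ler_nat R) natrM; lra.
have E40 : (expR eps ^+ n m) ^+ 40 <= 2 ^+ m.
  apply: expR_pow40_le; have := ler_wpM2r (ltW eps_gt0) (n_le m m_ge_M1).
  by rewrite -mulrA divfK ?gt_eqF // [80^-1 * _]mulrC.
have width_gt0 : (0 < m - 2 * h)%N by lia.
have concentrated := eps_DP_packing h2m width_gt0 mech dp
  (fun x => approx_kball_mass _ n_gt0 (ltW alpha_gt0) mech apx beta_le).
have := packing_bound_lt_half m_ge60 (exprn_ge0 _ (expR_ge0 eps)) E40.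
by move/lt_le_trans/(_ concentrated); rewrite ltxx.
Qed.
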